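(* Let $W$ be the Weyl group of a simply laced spherical Coxeter diagram, let $r$ be a reflection in $W$ with positive root $\delta_r$, and let $\beta,\gamma$ be two mutually orthogonal positive roots both moved by $r$, i.e. $(\beta,\delta_r)\neq0$ and $(\gamma,\delta_r)\ne0$. Then there exists a reflection $s\in W$ commuting with $r$ such that $\{\beta\}=rs\{\gamma\}$.
   Context: Roots are normalized to have $(\alpha,\alpha)=2$. For a set $B$ of mutually orthogonal positive roots and $w\in W$, $wB=\Phi^+\cap\{\pm w\beta:\beta\in B\}$, where $\Phi^+$ is the set of positive roots. *)

From HB Require Import structures.
From mathcomp Require Import all_boot all_order all_algebra.
From mathcomp Require Import reals.
Set Implicit Arguments. Unset Strict Implicit. Unset Printing Implicit Defensive.
Import Order.TTheory GRing.Theory Num.Theory.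
Local Open Scope ring_scope.

Section RootSystems.
Variables (R : realType) (n : nat).
Notation V := 'rV[R]_n.

Definition dot (x y : V) : R := \sum_(i < n) x 0 i * y 0 i.

(** reflection s_a(x) = x - (x,a) a  (valid since (a,a) = 2) *)
Definition refl (a x : V) : V := x - dot x a *: a.

(** A finite simply laced (crystallographic) root system, roots normalized
    to (a,a) = 2: closed under its reflections, integral inner products.
    (The Weyl group of a simply laced spherical Coxeter diagram is exactly
    the group generated by the reflections of such a root system.) *)
Definition simply_laced_root_system (Phi : seq V) : Prop :=
  [/\ forall a, a \in Phi -> dot a a = 2,
      forall a b, a \in Phi -> b \in Phi -> refl a b \in Phi
    & forall a b, a \in Phi -> b \in Phi -> exists z : int, dot a b = z%:~R].

(** positive system determined by a vector v which is not orthogonal to any root *)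
Definition regular (Phi : seq V) (v : V) : Prop :=
  forall a, a \in Phi -> dot v a != 0.

Definition posroots (Phi : seq V) (v : V) : seq V :=
  [seq a <- Phi | 0 < dot v a].

(** wB = Phi^+ \cap {+- w b : b in B} *)
Definition act_set (Phi : seq V) (v : V) (w : V -> V) (B : seq V) : seq V :=
  [seq x <- posroots Phi v | has (fun b => (x == w b) || (x == - w b)) B].

End RootSystems.

(* Put b = (beta, delta) and c = (gamma, delta); integrality of the inner
   products of distinct, non-opposite roots forces b^2 = c^2 = 1.  The root
   eps = s_beta (s_delta gamma) = gamma - c delta + c b beta is orthogonal to
   delta, so s_eps commutes with s_delta, and (gamma, eps) = 1 gives
   s_delta s_eps gamma = -(c b) beta, i.e. {beta} = s_delta s_eps {gamma}. *)
From HB Require Import structures.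
From mathcomp Require Import all_boot all_order all_algebra.
From mathcomp Require Import reals ring lra zify.
Set Implicit Arguments. Unset Strict Implicit. Unset Printing Implicit Defensive.
Import Order.TTheory GRing.Theory Num.Theory.
Local Open Scope ring_scope.

Section InnerProduct.
Variables (R : realType) (n : nat).
Implicit Types (x y z a : 'rV[R]_n) (k : R).

Lemma dotC x y : dot x y = dot y x.
Proof. by apply: eq_bigr => i _; rewrite mulrC. Qed.

Lemma dotBZl x y z k : dot (x - k *: y) z = dot x z - k * dot y z.
Proof.
by rewrite /dot mulr_sumr -sumrB; apply: eq_bigr => i _; rewrite !mxE; ring.
Qed.

Lemma dotBZr x y z k : dot z (x - k *: y) = dot z x - k * dot z y.
Proof. by rewrite dotC dotBZl !(dotC z). Qed.

Lemma dotNr x y : dot x (- y) = - dot x y.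
Proof. by rewrite /dot -sumrN; apply: eq_bigr => i _; rewrite mxE mulrN. Qed.

Lemma dotxx_ge0 x : 0 <= dot x x.
Proof. by apply: sumr_ge0 => i _; rewrite -expr2 sqr_ge0. Qed.

Lemma dotxx_eq0 x : (dot x x == 0) = (x == 0).
Proof.
apply/eqP/eqP => [|->]; last by rewrite /dot big1 // => i _; rewrite mxE mul0r.
have sq_ge0 i : 0 <= x 0 i * x 0 i by rewrite -expr2 sqr_ge0.
move/psumr_eq0P => /(_ (fun i _ => sq_ge0 i)) x2_eq0.
apply/rowP => i; apply/eqP; rewrite mxE -[_ == 0]orbb -mulf_eq0.
by rewrite x2_eq0.
Qed.

Lemma dot_refll a x y : dot (refl a x) y = dot x y - dot x a * dot a y.
Proof. exact: dotBZl. Qed.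

Lemma refl_comm a b x : dot a b = 0 -> refl a (refl b x) = refl b (refl a x).
Proof.
move=> ab0; rewrite {1}/refl dot_refll (dotC b a) ab0 mulr0 subr0.
rewrite [RHS]/refl dot_refll ab0 mulr0 subr0.
by apply/rowP => i; rewrite /refl !mxE; ring.
Qed.

Section CommutingRoot.
Variables delta beta gamma : 'rV[R]_n.
Hypotheses (delta2 : dot delta delta = 2) (gamma2 : dot gamma gamma = 2).
Hypotheses (beta_gamma : dot beta gamma = 0) (beta_delta2 : dot beta delta ^+ 2 = 1).
Hypothesis gamma_delta2 : dot gamma delta ^+ 2 = 1.
Local Notation eps := (refl beta (refl delta gamma)).

Lemma dot_refl_gamma_beta :
  dot (refl delta gamma) beta = - (dot gamma delta * dot beta delta).
Proof. by rewrite dot_refll (dotC gamma) beta_gamma (dotC delta); ring. Qed.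

Lemma commuting_root_orth : dot eps delta = 0.
Proof.
rewrite dot_refll dot_refl_gamma_beta dot_refll delta2.
by rewrite mulNr opprK -mulrA -expr2 beta_delta2; ring.
Qed.

Lemma dot_commuting_root : dot gamma eps = 1.
Proof.
rewrite dotC dot_refll dot_refl_gamma_beta beta_gamma mulr0 subr0 dot_refll.
by rewrite gamma2 (dotC delta) -gamma_delta2; ring.
Qed.

Lemma refl_commuting_root :
  refl delta (refl eps gamma) = - (dot gamma delta * dot beta delta) *: beta.
Proof.
rewrite {1}/refl dot_refll commuting_root_orth mulr0 subr0.
rewrite /refl dot_commuting_root scale1r -/(refl delta gamma) dot_refl_gamma_beta.
by apply/rowP => i; rewrite /refl !mxE; ring.
Qed.

End CommutingRoot.
End InnerProduct.

Section RootSystem.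
Variables (R : realType) (n : nat) (Phi : seq 'rV[R]_n).
Hypothesis HPhi : simply_laced_root_system Phi.

(* (a - k b, a - k b) = 4 - 2 k (a, b) > 0 for k = +-1 unless a = k b, so the
   integer (a, b) lies strictly between -2 and 2. *)
Lemma root_dot_sqr a b : a \in Phi -> b \in Phi ->
  a != b -> a != - b -> dot a b != 0 -> dot a b ^+ 2 = 1.
Proof.
case: HPhi => norm2 _ integral Pa Pb ab anb ab0.
have sub_gt0 k : k ^+ 2 = 1 -> a != k *: b -> 0 < 4 - 2 * k * dot a b.
  move=> k2 a_kb; have := dotxx_ge0 (a - k *: b).
  rewrite le_eqVlt eq_sym dotxx_eq0 subr_eq0 (negbTE a_kb) /=.
  suff -> : dot (a - k *: b) (a - k *: b) = 4 - 2 * k * dot a b by [].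
  rewrite dotBZl !dotBZr (dotC b a) !norm2 //.
  have -> : 4 = 2 + 2 * k ^+ 2 :> R by rewrite k2; ring.
  by ring.
have [z az] := integral a b Pa Pb.
have := sub_gt0 1 (expr1n _ _); rewrite scale1r => /(_ ab).
have := sub_gt0 (-1) (sqrr_sign R 1); rewrite scaleN1r => /(_ anb).
rewrite az; move: ab0; rewrite az intr_eq0 => z0 lt1 lt2.
have : (-2 < z < 2)%R by rewrite -!(ltr_int R) intrN; apply/andP; split; lra.
move=> /andP[z_gt z_lt]; have zz : z * z = 1 by nia.
by rewrite expr2 -intrM zz.
Qed.

Section PositiveSystem.
Variable v : 'rV[R]_n.

Lemma posroot_root a : a \in posroots Phi v -> a \in Phi.
Proof. by rewrite mem_filter => /andP[]. Qed.

Lemma posroot_opp a : a \in posroots Phi v -> - a \notin posroots Phi v.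
Proof.
by rewrite !mem_filter dotNr oppr_gt0 => /andP[/ltW va_ge0 _]; rewrite ltNge va_ge0.
Qed.

Lemma posroot_dot_sqr a b : a \in posroots Phi v -> b \in posroots Phi v ->
  a != b -> dot a b != 0 -> dot a b ^+ 2 = 1.
Proof.
move=> Pa Pb ab; apply: root_dot_sqr; rewrite ?posroot_root //.
by apply: contraNneq (posroot_opp Pb) => <-.
Qed.

Lemma act_set1 (w : 'rV[R]_n -> 'rV[R]_n) b g k : b \in posroots Phi v ->
  k ^+ 2 = 1 -> w g = k *: b -> act_set Phi v w [:: g] =i [:: b].
Proof.
move=> Pb /eqP; rewrite sqrf_eq1 => k1 wg x; rewrite mem_filter /= orbF inE.
suff -> : (x == w g) || (x == - w g) = (x == b) || (x == - b).
  have [->|_] := eqVneq x b; first by rewrite Pb.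
  by case: eqP => //= ->; rewrite (negbTE (posroot_opp Pb)).
by rewrite wg; case/orP: k1 => /eqP->; rewrite ?scaleN1r ?scale1r ?opprK // orbC.
Qed.

End PositiveSystem.
End RootSystem.

Theorem lemma2p3 (R : realType) (n : nat) (Phi : seq 'rV[R]_n) (v : 'rV[R]_n)
  (HPhi : simply_laced_root_system Phi) (Hv : regular Phi v)
  (delta beta gamma : 'rV[R]_n)
  (Hdelta : delta \in posroots Phi v)
  (Hbeta : beta \in posroots Phi v) (Hgamma : gamma \in posroots Phi v)
  (Horth : dot beta gamma = 0)
  (Hbd : dot beta delta != 0) (Hgd : dot gamma delta != 0) :
  exists2 eps : 'rV[R]_n, eps \in Phi &
    (forall x, refl delta (refl eps x) = refl eps (refl delta x)) /\
    act_set Phi v (fun x => refl delta (refl eps x)) [:: gamma] =i [:: beta].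
Proof.
have [norm2 closed _] := HPhi.
have bd2 : dot beta delta ^+ 2 = 1.
  apply: (posroot_dot_sqr HPhi Hbeta Hdelta) => //.
  by apply: contraNneq Hgd => <-; rewrite dotC Horth.
have gd2 : dot gamma delta ^+ 2 = 1.
  apply: (posroot_dot_sqr HPhi Hgamma Hdelta) => //.
  by apply: contraNneq Hbd => <-; rewrite Horth.
have [[Pdelta Pbeta] Pgamma] := (posroot_root Hdelta, posroot_root Hbeta, posroot_root Hgamma).
exists (refl beta (refl delta gamma)); first by rewrite !closed.
have delta2 := norm2 _ Pdelta; have gamma2 := norm2 _ Pgamma.
split=> [x|].
  by apply: refl_comm; rewrite dotC commuting_root_orth.
apply: (act_set1 Hbeta _ (refl_commuting_root delta2 gamma2 Horth bd2 gd2)).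
by rewrite sqrrN exprMn gd2 bd2 mulr1.
Qed.
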